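(* Let $n\geq1$ and let $e\in\mathbf{I}_n(\geq,\geq,-)$ have parameters $(p,q)$. Then there are exactly $p+q$ sequences $f\in\mathbf{I}_{n+1}(\geq,\geq,-)$ whose first $n$ entries form $e$; these are $f=(e_1,\ldots,e_n,b)$ with $\beta(e)<b\leq n$, and, as $b$ runs from $\beta(e)+1$ to $n$, their parameters are respectively $$(p-1,q+1),(p-2,q+1),\ldots,(0,q+1),\ (p+1,q),(p+2,q-1),\ldots,(p+q,1).$$
   Context: $\mathbf{I}_n$ is the set of inversion sequences $e=(e_1,\ldots,e_n)$ with $0\leq e_i<i$. $\mathbf{I}_n(\geq,\geq,-)$ is the set of $e\in\mathbf{I}_n$ with no indices $i<j<k$ such that $e_i\geq e_j\geq e_k$. An entry $e_i$ is a left-to-right maximum if $e_i>e_j$ for all $j<i$. Let $\alpha(e)=\max\{e_1,\ldots,e_n\}$ and let $\beta(e)$ be the largest element of $\{e_i: e_i \text{ is not a left-to-right maximum}\}\cup\{-1\}$. The parameters of $e\in\mathbf{I}_n(\geq,\geq,-)$ are $(p,q)$ with $p=\alpha(e)-\beta(e)$ and $q=n-\alpha(e)$. (When $p=0$ the first list is empty.) *)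

(* Sequences are 0-indexed: e = [:: e_1; ...; e_n], nth 0 e i = e_{i+1}. *)
From mathcomp Require Import all_boot all_order all_algebra.
Set Implicit Arguments. Unset Strict Implicit. Unset Printing Implicit Defensive.
Import Order.TTheory GRing.Theory Num.Theory.

(* e is an inversion sequence: 0 <= e_i < i (1-indexed), i.e. nth 0 e i <= i (0-indexed) *)
Definition is_inv_seq (e : seq nat) : bool :=
  all (fun i => nth 0 e i <= i) (iota 0 (size e)).

Definition avoids_gege (e : seq nat) : bool :=
  [forall i : 'I_(size e), forall j : 'I_(size e), forall k : 'I_(size e),
     ((i < j) && (j < k)) ==>
     ~~ ((nth 0 e j <= nth 0 e i) && (nth 0 e k <= nth 0 e j))].

Definition in_I_gege (n : nat) (e : seq nat) : bool :=
  [&& size e == n, is_inv_seq e & avoids_gege e].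

Definition is_ltr_max (e : seq nat) (i : nat) : bool :=
  all (fun j => nth 0 e j < nth 0 e i) (iota 0 i).

Local Open Scope nat_scope.
Definition alpha (e : seq nat) : nat := \max_(x <- e) x.


Local Open Scope ring_scope.
Definition beta (e : seq nat) : int :=
  \big[Num.max/(-1)%R]_(i <- iota 0 (size e) | ~~ is_ltr_max e i) (nth 0%N e i)%:Z.

Definition params (e : seq nat) : int * int :=
  ((alpha e)%:Z - beta e, (size e)%:Z - (alpha e)%:Z)%R.

(* Appending b to e keeps an inversion sequence iff b <= n, and creates no
   pattern e_i >= e_j >= b iff b exceeds every entry e_j having some e_i >= e_j
   to its left, i.e. every entry that is not a left-to-right maximum: that is,
   iff beta(e) < b.  If b <= alpha(e) the new entry is not a left-to-right
   maximum, so alpha is unchanged and beta becomes b; if b > alpha(e) it is a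
   new left-to-right maximum, so alpha becomes b and beta is unchanged. *)

From mathcomp Require Import all_boot all_order all_algebra.
From mathcomp Require Import zify.
Import Order.TTheory GRing.Theory Num.Theory.
Local Open Scope ring_scope.

Section InversionSequences.
Local Set Implicit Arguments.
Local Unset Strict Implicit.

Lemma nth_rcons_size (e : seq nat) b : nth 0%N (rcons e b) (size e) = b.
Proof. by rewrite nth_rcons ltnn eqxx. Qed.

Lemma nth_rcons_lt (e : seq nat) b i :
  (i < size e)%N -> nth 0%N (rcons e b) i = nth 0%N e i.
Proof. by move=> lt_i; rewrite nth_rcons lt_i. Qed.

Lemma is_ltr_maxP (e : seq nat) i :
  reflect (forall j, (j < i)%N -> (nth 0 e j < nth 0 e i)%N) (is_ltr_max e i).
Proof.
by apply: (iffP allP) => ltr_i j; [move=> lt_ji | rewrite mem_iota]; apply: ltr_i;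
  rewrite ?mem_iota.
Qed.

Lemma is_ltr_maxPn (e : seq nat) j :
  reflect (exists2 i, (i < j)%N & (nth 0 e j <= nth 0 e i)%N) (~~ is_ltr_max e j).
Proof.
rewrite /is_ltr_max -has_predC.
by apply: (iffP hasP) => -[i]; rewrite ?mem_iota /= -?leqNgt => lt_i le_ji;
  exists i; rewrite ?mem_iota /= -?leqNgt.
Qed.

Lemma avoids_gegeP (e : seq nat) :
  reflect (forall i j k, (i < j)%N -> (j < k)%N -> (k < size e)%N ->
             ~~ ((nth 0 e j <= nth 0 e i)%N && (nth 0 e k <= nth 0 e j)%N))
          (avoids_gege e).
Proof.
apply: (iffP forallP) => [avoid i j k lt_ij lt_jk lt_k | avoid i].
  have lt_j := ltn_trans lt_jk lt_k; have lt_i := ltn_trans lt_ij lt_j.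
  move/forallP/(_ (Ordinal lt_j))/forallP/(_ (Ordinal lt_k))/implyP: (avoid (Ordinal lt_i)).
  by apply; rewrite /= lt_ij lt_jk.
apply/forallP => j; apply/forallP => k; apply/implyP => /andP[lt_ij lt_jk].
exact: avoid lt_ij lt_jk (ltn_ord k).
Qed.

Lemma leq_nth_alpha (e : seq nat) j : (j < size e)%N -> (nth 0 e j <= alpha e)%N.
Proof. by move=> lt_j; apply: leq_bigmax_seq; rewrite ?mem_nth. Qed.

Lemma alpha_rcons (e : seq nat) b : alpha (rcons e b) = maxn (alpha e) b.
Proof. by rewrite /alpha big_rcons. Qed.

Lemma alpha_lt_size (e : seq nat) :
  is_inv_seq e -> (0 < size e)%N -> (alpha e < size e)%N.
Proof.
move=> /allP inv_e e_gt0; rewrite -(prednK e_gt0) ltnS.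
apply/bigmax_leqP_seq => _ /(nthP 0) [j lt_j <-] _.
have := inv_e j; rewrite mem_iota => /(_ lt_j) le_j.
by rewrite -ltnS prednK // (leq_ltn_trans le_j lt_j).
Qed.

Lemma is_ltr_max_rcons (e : seq nat) b i : (i < size e)%N ->
  is_ltr_max (rcons e b) i = is_ltr_max e i.
Proof.
move=> lt_i; apply/is_ltr_maxP/is_ltr_maxP => ltr_i j lt_ji; have := ltr_i j lt_ji;
  by rewrite !nth_rcons_lt // (ltn_trans lt_ji lt_i).
Qed.

Lemma is_ltr_max_rcons_size (e : seq nat) b : (0 < size e)%N ->
  is_ltr_max (rcons e b) (size e) = (alpha e < b)%N.
Proof.
move=> e_gt0; apply/is_ltr_maxP/idP => [ltr_b | lt_alpha j lt_j].
  case: b ltr_b => [|b] ltr_b; first by have := ltr_b 0%N e_gt0; rewrite nth_rcons_size.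
  rewrite ltnS; apply/bigmax_leqP_seq => _ /(nthP 0) [j lt_j <-] _.
  by have := ltr_b j lt_j; rewrite nth_rcons_size nth_rcons_lt.
by rewrite nth_rcons_size nth_rcons_lt // (leq_ltn_trans (leq_nth_alpha lt_j)).
Qed.

Lemma beta_geN1 (e : seq nat) : -1 <= beta e.
Proof. exact: bigmax_ge_id. Qed.

Lemma beta_ltP (e : seq nat) (x : int) :
  reflect (-1 < x /\
           forall j, (j < size e)%N -> ~~ is_ltr_max e j -> (nth 0 e j)%:Z < x)
          (beta e < x).
Proof.
apply: (iffP idP) => [lt_beta | [x_gtN1 lt_x]].
  split=> [|j lt_j not_ltr]; first exact: le_lt_trans (beta_geN1 e) lt_beta.
  by apply: le_lt_trans lt_beta; apply: le_bigmax_seq; rewrite ?mem_iota.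
rewrite /beta big_seq_cond; apply: bigmax_lt => // j /andP[].
by rewrite mem_iota; apply: lt_x.
Qed.

Lemma beta_le_alpha (e : seq nat) : beta e <= (alpha e)%:Z.
Proof.
rewrite /beta big_seq_cond; apply: bigmax_le => // j /andP[].
by rewrite mem_iota lez_nat => /leq_nth_alpha.
Qed.

Lemma beta_rcons (e : seq nat) b :
  beta (rcons e b) = if is_ltr_max (rcons e b) (size e) then beta e
                     else Num.max (beta e) b%:Z.
Proof.
rewrite {1}/beta size_rcons -addn1 iotaD big_cat_idem ?maxxx //= big_cons big_nil.
have -> : \big[Num.max/(-1)]_(i <- iota 0 (size e) | ~~ is_ltr_max (rcons e b) i)
            (nth 0%N (rcons e b) i)%:Z = beta e.
  rewrite big_seq_cond [RHS]big_seq_cond.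
  apply: eq_big => [i | i /andP[]]; first apply: andb_id2l; rewrite mem_iota => lt_i.
    by rewrite is_ltr_max_rcons.
  by rewrite nth_rcons_lt.
rewrite nth_rcons_size; case: is_ltr_max => /=; first exact/max_idPl/beta_geN1.
by congr Num.max; apply/max_idPl.
Qed.

Lemma is_inv_seq_rcons (e : seq nat) b :
  is_inv_seq (rcons e b) = is_inv_seq e && (b <= size e)%N.
Proof.
rewrite /is_inv_seq size_rcons -addn1 iotaD all_cat /= nth_rcons_size andbT.
by congr andb; apply: eq_in_all => i; rewrite mem_iota => /nth_rcons_lt ->.
Qed.

Lemma avoids_gege_rcons (e : seq nat) b :
  avoids_gege (rcons e b) = avoids_gege e && (beta e < b%:Z).
Proof.
apply/avoids_gegeP/andP => [avoid | [/avoids_gegeP avoid /beta_ltP[_ lt_b]]].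
  split.
    apply/avoids_gegeP => i j k lt_ij lt_jk lt_k.
    have lt_j := ltn_trans lt_jk lt_k; have lt_i := ltn_trans lt_ij lt_j.
    have := avoid i j k lt_ij lt_jk; rewrite size_rcons ltnS (ltnW lt_k).
    by rewrite !nth_rcons_lt //; apply.
  apply/beta_ltP; split=> // j lt_j /is_ltr_maxPn[i lt_ij le_ji].
  have := avoid i j (size e) lt_ij lt_j; rewrite size_rcons ltnSn.
  rewrite nth_rcons_size !nth_rcons_lt ?(ltn_trans lt_ij) // le_ji ltz_nat ltnNge.
  by apply.
move=> i j k lt_ij lt_jk; rewrite size_rcons ltnS leq_eqVlt => /predU1P[k_eq | lt_k].
  subst k; rewrite nth_rcons_size !nth_rcons_lt ?(ltn_trans lt_ij) //.
  apply/negP => /andP[le_ji le_bj].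
  have not_ltr : ~~ is_ltr_max e j by apply/is_ltr_maxPn; exists i.
  by have := lt_b j lt_jk not_ltr; rewrite ltz_nat ltnNge le_bj.
have lt_j := ltn_trans lt_jk lt_k; have lt_i := ltn_trans lt_ij lt_j.
by rewrite !nth_rcons_lt //; apply: avoid.
Qed.

Lemma in_I_gege_rcons n (e : seq nat) b : in_I_gege n e ->
  in_I_gege n.+1 (rcons e b) = (beta e < b%:Z) && (b <= n)%N.
Proof.
case/and3P=> /eqP <- inv_e avoid_e.
by rewrite /in_I_gege size_rcons eqxx is_inv_seq_rcons avoids_gege_rcons inv_e avoid_e /= andbC.
Qed.

Lemma beta_rcons_le_alpha (e : seq nat) b : (0 < size e)%N ->
  beta e <= b%:Z -> (b <= alpha e)%N -> beta (rcons e b) = b%:Z.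
Proof.
move=> e_gt0 le_beta le_alpha.
by rewrite beta_rcons is_ltr_max_rcons_size // ltnNge le_alpha; apply/max_idPr.
Qed.

Lemma beta_rcons_gt_alpha (e : seq nat) b : (0 < size e)%N ->
  (alpha e < b)%N -> beta (rcons e b) = beta e.
Proof. by move=> e_gt0 lt_alpha; rewrite beta_rcons is_ltr_max_rcons_size // lt_alpha. Qed.

Lemma card_ord_geq k m : #|[set i : 'I_k | (m <= i)%N]| = (k - m)%N.
Proof.
rewrite -sum1_card (eq_bigl (fun i : 'I_k => true && (m <= i)%N)) => [|i]; last by rewrite inE.
by rewrite -(big_geq_mkord m k xpredT (fun=> 1%N)) sum_nat_const_nat muln1.
Qed.

Lemma card_extensions n (e : seq nat) : (0 < n)%N -> in_I_gege n e ->
  #|[set b : 'I_n.+1 | in_I_gege n.+1 (rcons e b)]|%:Z = n%:Z - beta e.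
Proof.
move=> n_gt0 eI; have /and3P[/eqP size_e inv_e _] := eI.
have lt_alpha : (alpha e < n)%N by rewrite -size_e alpha_lt_size // size_e.
have beta_ge := beta_geN1 e; have beta_le := beta_le_alpha e.
set m := absz (beta e + 1).
have m_eq : m%:Z = beta e + 1 by rewrite gez0_abs; lia.
have -> : [set b : 'I_n.+1 | in_I_gege n.+1 (rcons e b)] = [set b : 'I_n.+1 | (m <= b)%N].
  apply/setP => b; rewrite !inE in_I_gege_rcons // -ltnS ltn_ord andbT.
  by rewrite -lez_nat m_eq lezD1.
rewrite card_ord_geq; lia.
Qed.

End InversionSequences.

Theorem lemma2p2 (n : nat) (e : seq nat) (p q : int) :
  (1 <= n)%N -> in_I_gege n e -> params e = (p, q) ->
  (* the extensions f = e ++ [b] lying in I_{n+1}(>=,>=,-) are exactly those with beta(e) < b <= n *)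
  (forall b : nat, in_I_gege n.+1 (rcons e b) = (beta e < b%:Z) && (b <= n)%N) /\
  (* there are exactly p + q of them (every f in I_{n+1} has last entry < n+1) *)
  (#|[set b : 'I_n.+1 | in_I_gege n.+1 (rcons e b)]|%:Z = p + q) /\
  (* parameters for beta(e) < b <= alpha(e): (p - (b - beta), q + 1) *)
  (forall b : nat, beta e < b%:Z -> (b <= alpha e)%N ->
     params (rcons e b) = (p - (b%:Z - beta e), q + 1)) /\
  (* parameters for alpha(e) < b <= n: (p + (b - alpha), q - (b - alpha) + 1) *)
  (forall b : nat, (alpha e < b)%N -> (b <= n)%N ->
     params (rcons e b) = (p + (b%:Z - (alpha e)%:Z), q - (b%:Z - (alpha e)%:Z) + 1)).
Proof.
move=> n_gt0 eI; rewrite /params => -[<- <-].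
have /and3P[/eqP size_e _ _] := eI.
have e_gt0 : (0 < size e)%N by rewrite size_e.
split; first by move=> b; apply: in_I_gege_rcons.
split; first by rewrite card_extensions // size_e; lia.
split=> b lo hi; rewrite size_rcons alpha_rcons.
- rewrite (maxn_idPl hi) beta_rcons_le_alpha ?ltW //; congr pair; lia.
- rewrite (maxn_idPr (ltnW lo)) beta_rcons_gt_alpha //; congr pair; lia.
Qed.
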